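(* Let $L>0$, $g\in L^2(0,L;\mathbb{C})$, $\lambda_0=\int_0^L\overline{g(x)}dx$, $\lambda_k=\frac{2ik\pi}{L}$ for $k\in\mathbb{Z}\setminus\{0\}$, and assume $\lambda_0\ne\lambda_k$ for all $k\ne0$. Let $\tilde A^*$ be the operator on $L^2(0,L)$ with domain $D(\tilde A^* )=\{z\in H^1(0,L):z(L)=z(0)\}$, $\tilde A^*z(x)=-z'(x)+\int_0^L\overline{g(y)}z(y)dy$, and $\tilde B^*:D(\tilde A^* )\to\mathbb{C}$, $\tilde B^*z=z(L)$. Then $\ker(\lambda-\tilde A^* )\cap\ker\tilde B^*=\{0\}$ for every $\lambda\in\mathbb{C}$ if and only if $$1+\frac{1}{\lambda_k-\lambda_0}\int_0^L\overline{g(x)}e^{-\lambda_kx}dx\ne0\quad\text{for all }k\in\mathbb{Z}\setminus\{0\}.$$ *)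

From HB Require Import structures.
From mathcomp Require Import all_boot all_order all_algebra.
From mathcomp Require Import all_classical all_reals all_analysis.
From mathcomp Require Import complex.
Set Implicit Arguments. Unset Strict Implicit. Unset Printing Implicit Defensive.
Import Order.TTheory GRing.Theory Num.Theory.
Import numFieldNormedType.Exports.
Local Open Scope classical_set_scope.
Local Open Scope ring_scope.

Section Defs.
Variable R : realType.
Local Notation mu := (@lebesgue_measure R).

Definition ReF (f : R -> R[i]) : R -> R := fun x => complex.Re (f x).
Definition ImF (f : R -> R[i]) : R -> R := fun x => complex.Im (f x).

Definition cint (a b : R) (f : R -> R[i]) : R[i] :=
  Complex (\int[mu]_(x in `[a, b]) ReF f x) (\int[mu]_(x in `[a, b]) ImF f x).

Definition L2 (L : R) (f : R -> R[i]) : Prop :=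
  [/\ measurable_fun `[0, L] (ReF f), measurable_fun `[0, L] (ImF f) &
      mu.-integrable `[0, L]
        (fun x => ((ReF f x) ^+ 2 + (ImF f x) ^+ 2)%:E)].

(* w is a (weak) derivative of z in L^2 on [0,L], i.e. z is (the continuous
   representative of) an H^1(0,L) function with z' = w:
   z(x) = z(0) + \int_0^x w  for all x in [0,L]. *)
Definition H1_deriv (L : R) (z w : R -> R[i]) : Prop :=
  L2 L w /\ forall x, 0 <= x <= L -> z x = z 0 + cint 0 x w.

Definition H1 (L : R) (z : R -> R[i]) : Prop := exists w, H1_deriv L z w.

Definition in_dom_Astar (L : R) (z : R -> R[i]) : Prop := H1 L z /\ z L = z 0.

Definition in_ker_lam_Astar (L : R) (g : R -> R[i]) (lam : R[i])
    (z : R -> R[i]) : Prop :=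
  in_dom_Astar L z /\
  exists w, H1_deriv L z w /\
    {ae mu, forall x, 0 <= x <= L ->
       lam * z x - (- w x + cint 0 L (fun y => (g y)^*%C * z y)) = 0}.

Definition Bstar (z : R -> R[i]) (L : R) : R[i] := z L.

Definition expi (t : R) : R[i] := Complex (cos t) (sin t).

Definition lamk (L : R) (k : int) : R[i] := Complex 0 (2 * k%:~R * pi / L).

Definition lam0 (L : R) (g : R -> R[i]) : R[i] := cint 0 L (fun x => (g x)^*%C).

End Defs.

(* An element z of ker(lam - A* ) with z(L) = 0 also vanishes at 0 and solves
   z' = c - lam z with the constant c = \int_0^L conj(g) z.  Uniqueness for this
   linear equation (the energy e^{2 Re(lam) t} |z(t)|^2 is constant) gives z = c t
   when lam = 0, which z(L) = 0 kills, and z = (c / lam)(1 - e^{-lam t}) otherwise.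
   A nonzero such z vanishes at L only if lam = lam_k for some k <> 0, and then
   the definition of c reads lam_k = lam_0 - \int_0^L conj(g) e^{-lam_k x}, i.e.
   the quantity 1 + (lam_k - lam_0)^{-1} \int_0^L conj(g) e^{-lam_k x} vanishes.
   Conversely, when it vanishes, 1 - e^{-lam_k x} is a nonzero element of the
   kernel vanishing at L. *)

From HB Require Import structures.
From mathcomp Require Import all_boot all_order all_algebra.
From mathcomp Require Import all_classical all_reals all_analysis.
From mathcomp Require Import complex.
From mathcomp Require Import ring lra measurable_realfun.
Set Implicit Arguments. Unset Strict Implicit. Unset Printing Implicit Defensive.
Import Order.TTheory GRing.Theory Num.Theory.
Import numFieldNormedType.Exports.
Local Open Scope classical_set_scope.
Local Open Scope ring_scope.

Section ComplexIntegral.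
Variable R : realType.
Local Notation mu := (@lebesgue_measure R).
Implicit Types (a b t : R) (f h : R -> R) (F G : R -> R[i]).

Lemma complex_eq (x y : R[i]) :
  complex.Re x = complex.Re y -> complex.Im x = complex.Im y -> x = y.
Proof. by case: x => ? ?; case: y => ? ? /= -> ->. Qed.

Lemma ReFB F G : ReF (fun x => F x - G x) = fun x => ReF F x - ReF G x.
Proof. by apply/funext => x; rewrite /ReF; case: (F x); case: (G x). Qed.

Lemma ImFB F G : ImF (fun x => F x - G x) = fun x => ImF F x - ImF G x.
Proof. by apply/funext => x; rewrite /ImF; case: (F x); case: (G x). Qed.

Lemma ReFZ (c : R[i]) F :
  ReF (fun x => c * F x) = fun x => complex.Re c * ReF F x - complex.Im c * ImF F x.
Proof. by apply/funext => x; rewrite /ReF /ImF; case: c; case: (F x). Qed.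

Lemma ImFZ (c : R[i]) F :
  ImF (fun x => c * F x) = fun x => complex.Re c * ImF F x + complex.Im c * ReF F x.
Proof. by apply/funext => x; rewrite /ReF /ImF; case: c; case: (F x) => ? ? ? ? /=; ring. Qed.

Definition itv_integrable a b f := mu.-integrable `[a, b] (EFin \o f).

Definition cintegrable a b F :=
  itv_integrable a b (ReF F) /\ itv_integrable a b (ImF F).

Lemma itv_integrableD a b f h : itv_integrable a b f -> itv_integrable a b h ->
  itv_integrable a b (fun x => f x + h x).
Proof.
move=> fI ih; rewrite /itv_integrable.
have -> : EFin \o (fun x => f x + h x) = ((EFin \o f) \+ (EFin \o h))%E.
  by apply/funext => x /=; rewrite EFinD.
exact: integrableD.
Qed.

Lemma itv_integrableN a b f : itv_integrable a b f ->
  itv_integrable a b (fun x => - f x).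
Proof.
move=> fI; rewrite /itv_integrable.
have -> : EFin \o (fun x => - f x) = -%E \o (EFin \o f).
  by apply/funext => x /=; rewrite EFinN.
exact: integrableN.
Qed.

Lemma itv_integrableB a b f h : itv_integrable a b f -> itv_integrable a b h ->
  itv_integrable a b (fun x => f x - h x).
Proof. by move=> fI ih; exact: itv_integrableD fI (itv_integrableN ih). Qed.

Lemma itv_integrableZ a b k f : itv_integrable a b f ->
  itv_integrable a b (fun x => k * f x).
Proof.
move=> fI; rewrite /itv_integrable.
have -> : EFin \o (fun x => k * f x) = (fun x => k%:E * (EFin \o f) x)%E.
  by apply/funext => x /=; rewrite EFinM.
exact: integrableZl.
Qed.

Lemma itv_integrableM_bounded a b f h M : itv_integrable a b f -> continuous h ->
  (forall x, `|h x| <= M) -> itv_integrable a b (fun x => f x * h x).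
Proof.
move=> fI ch hM; rewrite /itv_integrable.
have -> : EFin \o (fun x => f x * h x) = ((EFin \o f) \* (EFin \o h))%E.
  by apply/funext => x /=; rewrite EFinM.
apply: integrableMl => //; first exact: measurable_funS (continuous_measurable_fun ch).
by exists M; split; rewrite ?num_real => // M' MM' x _; exact: le_trans (hM x) (ltW MM').
Qed.

Lemma continuous_itv_integrable a b f : {within `[a, b], continuous f} ->
  itv_integrable a b f.
Proof. by move=> cf; apply: continuous_compact_integrable => //; exact: segment_compact. Qed.

Lemma L2_cintegrable L F : L2 L F -> cintegrable 0 L F.
Proof.
case=> mRe mIm iF.
have i1F : itv_integrable 0 L (fun x => 1 + (ReF F x ^+ 2 + ImF F x ^+ 2)).
  rewrite /itv_integrable.
  have -> : EFin \o (fun x => 1 + (ReF F x ^+ 2 + ImF F x ^+ 2)) =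
            (EFin \o cst 1) \+ (fun x => (ReF F x ^+ 2 + ImF F x ^+ 2)%:E).
    by apply/funext => x /=; rewrite EFinD.
  apply: integrableD => //; apply: continuous_itv_integrable.
  exact/continuous_subspaceT/cst_continuous.
have le_sqr (u v : R) : `|u| <= `|1 + (u ^+ 2 + v ^+ 2)|.
  rewrite [X in _ <= X]ger0_norm ?addr_ge0 ?sqr_ge0 //.
  rewrite -(real_normK (num_real u)).
  by have := normr_ge0 u; have := sqr_ge0 v; move: `|u| => n; nra.
split; apply: le_integrable i1F => //; try exact/measurable_EFinP.
  by move=> x _; rewrite /= lee_fin le_sqr.
by move=> x _; rewrite /= lee_fin [_ + ImF F x ^+ 2]addrC le_sqr.
Qed.

Lemma cintegrable_conj a b F : cintegrable a b F ->
  cintegrable a b (fun x => (F x)^*%C).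
Proof.
rewrite /cintegrable.
have -> : ReF (fun x => (F x)^*%C) = ReF F.
  by apply/funext => x; rewrite /ReF; case: (F x).
have -> : ImF (fun x => (F x)^*%C) = fun x => - ImF F x.
  by apply/funext => x; rewrite /ImF; case: (F x).
by case=> iRe iIm; split => //; exact: itv_integrableN.
Qed.

Lemma continuous_cintegrable a b F :
  {within `[a, b], continuous (ReF F)} -> {within `[a, b], continuous (ImF F)} ->
  cintegrable a b F.
Proof. by move=> cRe cIm; split; exact: continuous_itv_integrable. Qed.

Lemma cintegrableB a b F G : cintegrable a b F -> cintegrable a b G ->
  cintegrable a b (fun x => F x - G x).
Proof.
by case=> ? ?; case=> ? ?; rewrite /cintegrable ReFB ImFB; split; exact: itv_integrableB.
Qed.

Lemma cintegrableZ a b (c : R[i]) F : cintegrable a b F ->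
  cintegrable a b (fun x => c * F x).
Proof.
case=> ? ?; rewrite /cintegrable ReFZ ImFZ.
by split; [apply: itv_integrableB | apply: itv_integrableD]; exact: itv_integrableZ.
Qed.

Lemma cintegrableM_expi a b F (theta : R -> R) : cintegrable a b F -> continuous theta ->
  cintegrable a b (fun x => F x * expi (theta x)).
Proof.
case=> iRe iIm ctheta; rewrite /cintegrable.
have ccos : continuous (cos \o theta).
  by move=> x; apply: continuous_comp; [exact: ctheta | exact: continuous_cos].
have csin : continuous (sin \o theta).
  by move=> x; apply: continuous_comp; [exact: ctheta | exact: continuous_sin].
have icos f : itv_integrable a b f -> itv_integrable a b (fun x => f x * cos (theta x)).
  by move=> fI; apply: itv_integrableM_bounded fI ccos _ => x; exact: cos_max.
have isin f : itv_integrable a b f -> itv_integrable a b (fun x => f x * sin (theta x)).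
  by move=> fI; apply: itv_integrableM_bounded fI csin _ => x; exact: sin_max.
have -> : ReF (fun x => F x * expi (theta x)) =
          fun x => ReF F x * cos (theta x) - ImF F x * sin (theta x).
  by apply/funext => x; rewrite /ReF /ImF /expi; case: (F x).
have -> : ImF (fun x => F x * expi (theta x)) =
          fun x => ReF F x * sin (theta x) + ImF F x * cos (theta x).
  by apply/funext => x; rewrite /ReF /ImF /expi; case: (F x) => ? ? /=; ring.
split; [apply: itv_integrableB | apply: itv_integrableD];
  by [apply: icos | apply: isin].
Qed.

Lemma eq_Rintegral_itv a b f h : (forall x, a <= x <= b -> f x = h x) ->
  \int[mu]_(x in `[a, b]) f x = \int[mu]_(x in `[a, b]) h x.
Proof. by move=> fh; apply: eq_Rintegral => x; rewrite inE /= in_itv /= => /fh. Qed.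

Lemma eq_cint a b F G : (forall x, a <= x <= b -> F x = G x) -> cint a b F = cint a b G.
Proof.
move=> FG; rewrite /cint; congr Complex; apply: eq_Rintegral_itv => x /FG.
  by rewrite /ReF => ->.
by rewrite /ImF => ->.
Qed.

Lemma cintB a b F G : cintegrable a b F -> cintegrable a b G ->
  cint a b (fun x => F x - G x) = cint a b F - cint a b G.
Proof. by case=> ? ?; case=> ? ?; rewrite /cint ReFB ImFB !RintegralB. Qed.

Lemma cintZ a b (c : R[i]) F : cintegrable a b F ->
  cint a b (fun x => c * F x) = c * cint a b F.
Proof.
case=> iRe iIm; rewrite /cint ReFZ ImFZ RintegralB ?RintegralD ?RintegralZl //;
  try exact: itv_integrableZ.
by case: c => ? ? /=; congr Complex; ring.
Qed.

Lemma cint_cst t (c : R[i]) : 0 <= t -> cint 0 t (fun=> c) = c * (t%:C)%C.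
Proof.
move=> t0; have mu0t : fine (mu `[0, t]) = t.
  move: t0; rewrite le_eqVlt => /predU1P[<-|t0].
    by rewrite set_itv1 lebesgue_measure_set1.
  by rewrite lebesgue_measure_itv /= lte_fin t0 /= subr0.
by rewrite /cint /ReF /ImF !Rintegral_cst // mu0t; case: c => ? ? /=; congr Complex; ring.
Qed.

Lemma cintxx a F : cint a a F = 0.
Proof. by rewrite /cint set_itv1 !Rintegral_set1. Qed.

End ComplexIntegral.

Section Trigonometry.
Variable R : realType.

Lemma periodicz (f : R -> R) (x : R) (n : int) :
  (forall u, f (u + pi *+ 2) = f u) -> f (x + 2 * n%:~R * pi) = f x.
Proof.
move=> fper; have fpern (m : nat) y : f (y + 2 * m%:R * pi) = f y.
  have -> : 2 * m%:R * pi = pi *+ 2 *+ m :> R by rewrite -mulr_natr -mulr_natr; ring.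
  exact: periodicn.
case: n => m; first exact: fpern.
rewrite NegzE mulrNz mulrN mulNr.
by rewrite -[in RHS](subrK (2 * m.+1%:R * pi) x) fpern.
Qed.

Lemma cosDz2pi (x : R) (n : int) : cos (x + 2 * n%:~R * pi) = cos x.
Proof. by apply: periodicz; exact: cosD2pi. Qed.

Lemma sinDz2pi (x : R) (n : int) : sin (x + 2 * n%:~R * pi) = sin x.
Proof. by apply: periodicz; exact: sinD2pi. Qed.

Lemma cos_eq1 (t : R) : cos t = 1 -> exists n : int, t = 2 * n%:~R * pi.
Proof.
move=> ct.
have pi2_gt0 : 0 < 2 * pi :> R by rewrite mulr_gt0 ?pi_gt0.
pose n := Num.floor (t / (2 * pi)); pose r := t - 2 * n%:~R * pi.
have cr : cos r = 1 by rewrite -ct /r -[in RHS](subrK (2 * n%:~R * pi) t) cosDz2pi.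
have rE : r = (t / (2 * pi) - n%:~R) * (2 * pi) by rewrite /r mulrBl divfK ?gt_eqF //; ring.
have r_ge0 : 0 <= r by rewrite rE mulr_ge0 ?subr_ge0 ?Num.Theory.floor_le // ltW.
have r_lt : r < 2 * pi.
  rewrite rE -[X in _ < X]mul1r ltr_pM2r // ltrBlDl.
  by have := Num.Theory.floorD1_gt (t / (2 * pi)); rewrite intrD.
exists n; apply/eqP; rewrite -subr_eq0 -/r; apply/eqP.
have [r_lepi|pi_ltr] := lerP r pi.
  apply: (@cos_inj R r 0); rewrite ?in_itv /= ?r_ge0 ?r_lepi ?lexx ?pi_ge0 //.
  by rewrite cr cos0.
have c2 : cos (2 * pi - r) = cos 0.
  have -> : 2 * pi - r = - r + 2 * (1 : int)%:~R * pi by rewrite mulr1 addrC.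
  by rewrite cosDz2pi cosN cr cos0.
have := @cos_inj R (2 * pi - r) 0.
rewrite !in_itv /= lexx pi_ge0 c2 subr_ge0 (ltW r_lt) lerBlDr -lerBlDl.
have -> : 2 * pi - pi = pi :> R by ring.
rewrite (ltW pi_ltr) => /(_ isT isT erefl) /eqP.
by rewrite subr_eq0 => /eqP r2pi; move: r_lt; rewrite r2pi ltxx.
Qed.

End Trigonometry.

Section Calculus.
Variable R : realType.
Local Notation mu := (@lebesgue_measure R).

Lemma is_derive_scale_comp (f : R -> R) (k t df : R) : is_derive (k * t) 1 f df ->
  is_derive t 1 (fun s => f (k * s)) (df * k).
Proof.
move=> fd; apply: (@is_derive1_comp _ f ( *%R k) t _ _ fd).
by apply: is_derive_eq; exact: mulr1.
Qed.

Lemma is_derive_expRM (k t : R) :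
  is_derive t 1 (fun s => expR (k * s)) (expR (k * t) * k).
Proof. exact: is_derive_scale_comp. Qed.

Lemma is_derive_cosM (k t : R) :
  is_derive t 1 (fun s => cos (k * s)) (- sin (k * t) * k).
Proof. exact: is_derive_scale_comp. Qed.

Lemma is_derive_sinM (k t : R) :
  is_derive t 1 (fun s => sin (k * s)) (cos (k * t) * k).
Proof. exact: is_derive_scale_comp. Qed.

Lemma continuous_is_derive (f df : R -> R) :
  (forall t : R, is_derive t (1 : R) f (df t)) -> continuous f.
Proof.
by move=> fd t; apply: differentiable_continuous; apply/derivable1_diffP; case: (fd t).
Qed.

Lemma Rintegral_FTC (F f : R -> R) (x : R) : 0 <= x ->
  (forall t : R, is_derive t (1 : R) F (f t)) -> continuous f ->
  \int[mu]_(t in `[0, x]) f t = F x - F 0.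
Proof.
rewrite le_eqVlt => /predU1P[<-|x_gt0] Fd cf.
  by rewrite set_itv1 Rintegral_set1 subrr.
have cF := continuous_is_derive Fd.
have Fdc : derivable_oo_LRcontinuous F 0 x.
  split; first by move=> t _; case: (Fd t).
    exact: cvg_at_right_filter (cF 0).
  exact: cvg_at_left_filter (cF x).
have F'E : {in `]0, x[, F^`()%classic =1 f}.
  by move=> t _; rewrite derive1E; case: (Fd t).
by rewrite /Rintegral (continuous_FTC2 x_gt0 (continuous_subspaceT cf) Fdc F'E) -EFinB.
Qed.

Lemma is_derive_Rintegral (L t : R) (f : R -> R) : 0 < t < L ->
  {within `[0, L], continuous f} ->
  is_derive t 1 (fun s => \int[mu]_(x in `[0, s]) f x) (f t).
Proof.
move=> /andP[t_gt0 t_ltL] cf.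
have ct : {for t, continuous f}.
  apply: (within_continuous_continuous _ cf); first exact: lt_trans t_ltL.
  by rewrite in_itv /= t_gt0 t_ltL.
have [Fd F'E] := @continuous_FTC1 R f (BLeft 0) t L t_ltL (continuous_itv_integrable cf) t_gt0 ct.
by apply: DeriveDef; [exact: Fd | rewrite -derive1E].
Qed.

End Calculus.

Section ComplexDerivative.
Variable R : realType.
Implicit Types (t : R) (c lam : R[i]) (F G : R -> R[i]).

Definition is_cderive t F (dF : R[i]) :=
  is_derive t 1 (ReF F) (complex.Re dF) /\ is_derive t 1 (ImF F) (complex.Im dF).

Lemma is_cderive_cst t c : is_cderive t (fun=> c) 0.
Proof. by split; exact: is_derive_cst. Qed.

Lemma is_cderiveB t F G dF dG : is_cderive t F dF -> is_cderive t G dG ->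
  is_cderive t (fun s => F s - G s) (dF - dG).
Proof.
case=> ReFd ImFd [ReGd ImGd]; rewrite /is_cderive ReFB ImFB.
have [ReD ImD] : complex.Re (dF - dG) = complex.Re dF - complex.Re dG /\
                 complex.Im (dF - dG) = complex.Im dF - complex.Im dG.
  by case: (dF); case: (dG).
by rewrite ReD ImD; split; exact: is_deriveB.
Qed.

Lemma is_cderiveZ t c F dF : is_cderive t F dF ->
  is_cderive t (fun s => c * F s) (c * dF).
Proof.
case=> ReFd ImFd; rewrite /is_cderive ReFZ ImFZ.
split.
  apply: is_derive_eq (is_deriveB (is_deriveZ (complex.Re c) ReFd)
                                  (is_deriveZ (complex.Im c) ImFd)) _.
  by case: c; case: (dF).
apply: is_derive_eq (is_deriveD (is_deriveZ (complex.Re c) ImFd)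
                                (is_deriveZ (complex.Im c) ReFd)) _.
by case: c; case: (dF) => ? ? ? ? /=; rewrite /GRing.scale /=; ring.
Qed.

Lemma cderivable_continuous F (dF : R -> R[i]) : (forall t, is_cderive t F (dF t)) ->
  continuous (ReF F) /\ continuous (ImF F).
Proof.
move=> Fd; split; apply: continuous_is_derive => t; [exact: (Fd t).1 | exact: (Fd t).2].
Qed.

Lemma cint_FTC x F (f : R -> R[i]) : 0 <= x -> (forall t, is_cderive t F (f t)) ->
  continuous (ReF f) -> continuous (ImF f) -> cint 0 x f = F x - F 0.
Proof.
move=> x_ge0 Fd cRe cIm; rewrite /cint.
rewrite (Rintegral_FTC x_ge0 (fun t => (Fd t).1) cRe).
rewrite (Rintegral_FTC x_ge0 (fun t => (Fd t).2) cIm).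
by rewrite /ReF /ImF; case: (F x); case: (F 0).
Qed.

Definition cexpN lam t : R[i] :=
  Complex (expR (- complex.Re lam * t) * cos (complex.Im lam * t))
          (- (expR (- complex.Re lam * t) * sin (complex.Im lam * t))).

Lemma cexpN0 lam : cexpN lam 0 = 1.
Proof. by rewrite /cexpN !mulr0 expR0 cos0 sin0 mulr1 mulr0 oppr0. Qed.

Lemma is_cderive_cexpN lam t : is_cderive t (cexpN lam) (- lam * cexpN lam t).
Proof.
split.
  apply: is_derive_eq (is_deriveM (is_derive_expRM _ t) (is_derive_cosM _ t)) _.
  by rewrite /cexpN; case: lam => a b /=; rewrite /GRing.scale /=; ring.
apply: is_derive_eq (is_deriveN (is_deriveM (is_derive_expRM _ t) (is_derive_sinM _ t))) _.
by rewrite /cexpN; case: lam => a b /=; rewrite /GRing.scale /=; ring.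
Qed.

End ComplexDerivative.

Section LinearODE.
Variable R : realType.
Local Notation mu := (@lebesgue_measure R).
Implicit Types (L : R) (c d lam : R[i]) (F : R -> R[i]).

Lemma is_derive_energy lam F t : is_cderive t F (- lam * F t) ->
  is_derive t (1 : R)
    (fun s => expR (2 * complex.Re lam * s) * (ReF F s ^+ 2 + ImF F s ^+ 2)) 0.
Proof.
case; set a := complex.Re lam; set b := complex.Im lam.
have -> : complex.Re (- lam * F t) = - (a * ReF F t - b * ImF F t).
  by rewrite /a /b /ReF /ImF; case: (lam); case: (F t) => ? ? ? ? /=; ring.
have -> : complex.Im (- lam * F t) = - (a * ImF F t + b * ReF F t).
  by rewrite /a /b /ReF /ImF; case: (lam); case: (F t) => ? ? ? ? /=; ring.
move=> ReFd ImFd; apply: is_derive_eq (is_deriveM (is_derive_expRM (2 * a) t)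
  (is_deriveD (is_deriveX 2 ReFd) (is_deriveX 2 ImFd))) _.
rewrite /= !expr1 /GRing.scale /=.
have -> : (ReF F ^+ 2 + ImF F ^+ 2) t = ReF F t ^+ 2 + ImF F t ^+ 2 by [].
ring.
Qed.

Lemma is_cderive_linear_uniq L lam F : 0 < L ->
  {within `[0, L], continuous (ReF F)} -> {within `[0, L], continuous (ImF F)} ->
  (forall t, 0 < t < L -> is_cderive t F (- lam * F t)) -> F 0 = 0 ->
  forall t, 0 <= t <= L -> F t = 0.
Proof.
move=> L_gt0 cRe cIm Fd F0 x /andP[x_ge0 x_leL].
set a := complex.Re lam.
pose E t := expR (2 * a * t) * (ReF F t ^+ 2 + ImF F t ^+ 2).
have Ex : E x = E 0.
  move: x_ge0; rewrite le_eqVlt => /predU1P[<-//|x_gt0].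
  have Ed t : t \in `]0, x[ -> is_derive t (1 : R) E 0.
    rewrite in_itv /= => /andP[t_gt0 t_ltx]; apply: is_derive_energy.
    by apply: Fd; rewrite t_gt0 (lt_le_trans t_ltx x_leL).
  have cE : {within `[0, x], continuous E}.
    have sub : `[0, x] `<=` `[0, L] by apply: subset_itvl; rewrite bnd_simp.
    have cexp := continuous_is_derive (is_derive_expRM (2 * a)).
    rewrite /E => t.
    apply: (@continuousM R (subspace `[0, x]) (fun t => expR (2 * a * t))
                         (fun t => ReF F t ^+ 2 + ImF F t ^+ 2)).
      exact: (@continuous_subspaceT _ _ `[0, x] _ cexp t).
    apply: (@continuousD R R^o (subspace `[0, x])
                         (fun t => ReF F t ^+ 2) (fun t => ImF F t ^+ 2)).
      apply: (@continuousM R (subspace `[0, x]) (ReF F) (ReF F));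
        exact: (@continuous_subspaceW _ _ _ _ _ sub cRe t).
    apply: (@continuousM R (subspace `[0, x]) (ImF F) (ImF F));
      exact: (@continuous_subspaceW _ _ _ _ _ sub cIm t).
  have [t _] := MVT x_gt0 Ed cE.
  by rewrite mul0r => /eqP; rewrite subr_eq0 => /eqP.
move: Ex; rewrite /E mulr0 expR0 mul1r /ReF /ImF F0 expr0n /= addr0 => /eqP.
rewrite mulf_eq0 gt_eqF ?expR_gt0 //= paddr_eq0 ?sqr_ge0 // !sqrf_eq0.
by case/andP=> /eqP ReF0 /eqP ImF0; apply: complex_eq.
Qed.

End LinearODE.

Section IntegralEquation.
Variable R : realType.
Local Notation mu := (@lebesgue_measure R).
Implicit Types (L : R) (c d lam : R[i]) (F : R -> R[i]).

Lemma is_cderive_integral_equation L t lam c F : 0 < t < L ->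
  {within `[0, L], continuous (ReF F)} -> {within `[0, L], continuous (ImF F)} ->
  (forall s, 0 <= s <= L -> F s = c * (s%:C)%C - lam * cint 0 s F) ->
  is_cderive t F (c - lam * F t).
Proof.
move=> tI cRe cIm FE.
have near_t : \forall s \near t, 0 <= s <= L.
  have tI' : t \in `]0, L[ by rewrite in_itv.
  move: (near_in_itvoo tI'); apply: filterS => s.
  by rewrite in_itv /= => /andP[? ?]; rewrite !ltW.
pose P s := \int[mu]_(x in `[0, s]) ReF F x; pose Q s := \int[mu]_(x in `[0, s]) ImF F x.
have Pd : is_derive t (1 : R) P (ReF F t) := is_derive_Rintegral tI cRe.
have Qd : is_derive t (1 : R) Q (ImF F t) := is_derive_Rintegral tI cIm.
have idd := is_derive_id t (1 : R).
split.
  apply: (near_eq_is_derive _ (is_derive_eq (is_deriveB (is_deriveZ (complex.Re c) idd)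
    (is_deriveB (is_deriveZ (complex.Re lam) Pd) (is_deriveZ (complex.Im lam) Qd))) _)).
    move: near_t; apply: filterS => s sI.
    transitivity (complex.Re c * s - (complex.Re lam * P s - complex.Im lam * Q s)) => //.
    rewrite [RHS]/ReF (FE s sI) /cint /P /Q; case: (c); case: (lam) => ? ? ? ? /=; ring.
  rewrite /GRing.scale /= /ReF /ImF.
  by case: (c); case: (lam); case: (F t) => ? ? ? ? ? ? /=; ring.
apply: (near_eq_is_derive _ (is_derive_eq (is_deriveB (is_deriveZ (complex.Im c) idd)
  (is_deriveD (is_deriveZ (complex.Re lam) Qd) (is_deriveZ (complex.Im lam) Pd))) _)).
  move: near_t; apply: filterS => s sI.
  transitivity (complex.Im c * s - (complex.Re lam * Q s + complex.Im lam * P s)) => //.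
  rewrite [RHS]/ImF (FE s sI) /cint /P /Q; case: (c); case: (lam) => ? ? ? ? /=; ring.
rewrite /GRing.scale /= /ReF /ImF.
by case: (c); case: (lam); case: (F t) => ? ? ? ? ? ? /=; ring.
Qed.

Lemma integral_equation_solution L lam c d F : 0 < L ->
  {within `[0, L], continuous (ReF F)} -> {within `[0, L], continuous (ImF F)} ->
  (forall s, 0 <= s <= L -> F s = c * (s%:C)%C - lam * cint 0 s F) -> c = d * lam ->
  forall t, 0 <= t <= L -> F t = d * (1 - cexpN lam t).
Proof.
move=> L_gt0 cRe cIm FE cE.
pose G s := F s - d * (1 - cexpN lam s).
have Pd s : is_cderive s (fun s => d * (1 - cexpN lam s)) (d * (lam * cexpN lam s)).
  have := is_cderiveZ d (is_cderiveB (is_cderive_cst s 1) (is_cderive_cexpN lam s)).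
  by rewrite sub0r mulNr opprK.
have [cPRe cPIm] := cderivable_continuous Pd.
have cGRe : {within `[0, L], continuous (ReF G)}.
  by rewrite /G ReFB; apply: within_continuousB cRe (continuous_subspaceT cPRe).
have cGIm : {within `[0, L], continuous (ImF G)}.
  by rewrite /G ImFB; apply: within_continuousB cIm (continuous_subspaceT cPIm).
have Gd t : 0 < t < L -> is_cderive t G (- lam * G t).
  move=> tI; have := is_cderiveB (is_cderive_integral_equation tI cRe cIm FE) (Pd t).
  by rewrite /G cE; congr is_cderive; ring.
have G0 : G 0 = 0.
  rewrite /G FE ?lexx ?ltW // cintxx cexpN0.
  by apply: complex_eq; case: (c); case: (lam); case: (d) => ? ? ? ? ? ? /=; ring.
move=> t tI; apply/eqP; rewrite -subr_eq0; apply/eqP.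
exact: (is_cderive_linear_uniq L_gt0 cGRe cGIm Gd G0 tI).
Qed.

Lemma H1_deriv_continuous L (z w : R -> R[i]) : 0 <= L -> H1_deriv L z w ->
  {within `[0, L], continuous (ReF z)} /\ {within `[0, L], continuous (ImF z)}.
Proof.
move=> L_ge0 [/L2_cintegrable [wRe wIm] zE].
have zE' s : 0 <= s <= L ->
    ReF z s = complex.Re (z 0) + \int[mu]_(x in `[0, s]) ReF w x /\
    ImF z s = complex.Im (z 0) + \int[mu]_(x in `[0, s]) ImF w x.
  by move=> sI; rewrite /ReF /ImF (zE s sI) /cint; case: (z 0).
split.
  apply: (@subspace_eq_continuous _ `[0, L] _
           (fun s => complex.Re (z 0) + \int[mu]_(x in `[0, s]) ReF w x)).
    by move=> s; rewrite inE /= in_itv /= => /zE' [].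
  apply: within_continuousD; first exact: cst_continuous.
  exact: parameterized_integral_continuous.
apply: (@subspace_eq_continuous _ `[0, L] _
         (fun s => complex.Im (z 0) + \int[mu]_(x in `[0, s]) ImF w x)).
  by move=> s; rewrite inE /= in_itv /= => /zE' [].
apply: within_continuousD; first exact: cst_continuous.
exact: parameterized_integral_continuous.
Qed.

Lemma kernel_integral_equation L lam c (z w : R -> R[i]) : 0 <= L ->
  H1_deriv L z w -> z 0 = 0 ->
  {ae mu, forall x, 0 <= x <= L -> lam * z x - (- w x + c) = 0} ->
  forall t, 0 <= t <= L -> z t = c * (t%:C)%C - lam * cint 0 t z.
Proof.
move=> L_ge0 zw z0 hae t tI; have /andP[t_ge0 t_leL] := tI.
have [cRe cIm] := H1_deriv_continuous L_ge0 zw.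
case: zw => -[wRe wIm _] zE.
have sub : `[0, t] `<=` `[0, L] by apply: subset_itvl; rewrite bnd_simp.
have zI : cintegrable 0 t z.
  by apply: continuous_cintegrable; exact: continuous_subspaceW sub _.
have cI : cintegrable 0 t (fun=> c).
  by apply: continuous_cintegrable; exact: cst_continuous.
have [vRe vIm] := cintegrableB cI (cintegrableZ lam zI).
rewrite (zE t tI) z0 add0r -(cint_cst c t_ge0) -(cintZ lam zI) -cintB //;
  last exact: cintegrableZ.
have wE : {ae mu, forall x, `[0, t]%classic x -> w x = c - lam * z x}.
  move: hae; apply: (@filterS _ _ (ae_filter_ringOfSetsType mu)) => x hx.
  rewrite /= in_itv /= => /andP[x_ge0 x_let].
  have /hx /eqP : 0 <= x <= L by rewrite x_ge0 (le_trans x_let).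
  by rewrite subr_eq0 => /eqP ->; rewrite opprD opprK addrCA subrr addr0.
rewrite /cint; congr Complex; rewrite /Rintegral; congr fine;
  apply: ae_eq_integral => //.
- by apply/measurable_EFinP; apply: measurable_funS wRe.
- exact: (measurable_int mu vRe).
- move: wE; apply: (@filterS _ _ (ae_filter_ringOfSetsType mu)) => x wx.
  by move/wx; rewrite /ReF => ->.
- by apply/measurable_EFinP; apply: measurable_funS wIm.
- exact: (measurable_int mu vIm).
- move: wE; apply: (@filterS _ _ (ae_filter_ringOfSetsType mu)) => x wx.
  by move/wx; rewrite /ImF => ->.
Qed.

End IntegralEquation.

Section Eigenfunctions.
Variable R : realType.
Implicit Types (L : R) (lam : R[i]).

Lemma lamk0 L : lamk L 0 = 0.
Proof. by rewrite /lamk (_ : (0 : int)%:~R = 0 :> R) // mulr0 !mul0r. Qed.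

Lemma expi_lamk L (k : int) (x : R) :
  expi (- (2 * k%:~R * pi * x / L)) = cexpN (lamk L k) x.
Proof.
rewrite /expi /cexpN /= oppr0 mul0r expR0 !mul1r cosN sinN.
by rewrite [_ * x / L]mulrAC.
Qed.

Lemma cexpN_lamk_period L (k : int) : L != 0 -> cexpN (lamk L k) L = 1.
Proof.
move=> L_neq0; rewrite -expi_lamk mulfK // -[X in expi X]add0r /expi.
by rewrite -mulNr -mulrN -intrN cosDz2pi sinDz2pi cos0 sin0.
Qed.

Lemma cexpN_lamk_half L (k : int) : L != 0 -> k != 0 ->
  cexpN (lamk L k) (L / (2 * `|k%:~R : R|)) = -1.
Proof.
move=> L_neq0 k_neq0; have kR_neq0 : k%:~R != 0 :> R by rewrite intr_eq0.
rewrite /cexpN /= oppr0 mul0r expR0 !mul1r.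
have -> : 2 * k%:~R * pi / L * (L / (2 * `|k%:~R : R|)) = k%:~R / `|k%:~R : R| * pi.
  by field; rewrite ?normr_eq0 ?kR_neq0 ?L_neq0 ?pnatr_eq0.
have [k_gt0|k_le0] := ltrP 0 (k%:~R : R).
  by rewrite gtr0_norm // divff // mul1r cospi sinpi; apply: complex_eq; rewrite /= ?oppr0.
by rewrite ler0_norm // invrN mulrN divff // mulN1r cosN sinN cospi sinpi;
  apply: complex_eq; rewrite /= ?oppr0.
Qed.

Lemma cexpN_eq1 L lam : 0 < L -> cexpN lam L = 1 -> exists k : int, lam = lamk L k.
Proof.
move=> L_gt0; have L_neq0 : L != 0 by rewrite gt_eqF.
case: lam => a b /= [ecos esin].
have sin0 : sin (b * L) = 0.
  by move/eqP: esin; rewrite oppr_eq0 mulf_eq0 expR_eq0 /= => /eqP.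
have cos_gt0 : 0 < cos (b * L).
  by rewrite -(pmulr_rgt0 _ (expR_gt0 (- a * L))) ecos ltr01.
have cos1 : cos (b * L) = 1.
  have := cos2Dsin2 (b * L); rewrite sin0 expr0n /= addr0.
  by move: cos_gt0; set u := cos _ => u_gt0 u2; nra.
have a0 : a = 0.
  move: ecos; rewrite cos1 mulr1 -expR0 => /expR_inj /eqP.
  by rewrite mulf_eq0 (negbTE L_neq0) orbF oppr_eq0 => /eqP.
have [k bLE] := cos_eq1 cos1.
by exists k; rewrite /lamk a0 -bLE mulfK.
Qed.

Lemma cexpN_H1_deriv L lam :
  H1_deriv L (fun t => 1 - cexpN lam t) (fun t => lam * cexpN lam t).
Proof.
have ed := is_cderive_cexpN lam.
have wd t := is_cderiveZ lam (ed t).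
have [cRe cIm] := cderivable_continuous wd.
have zd t : is_cderive t (fun s => 1 - cexpN lam s) (lam * cexpN lam t).
  by have := is_cderiveB (is_cderive_cst t 1) (ed t); rewrite sub0r mulNr opprK.
split.
  split; try exact: measurable_funS (continuous_measurable_fun _).
  set w := fun t => lam * cexpN lam t.
  apply: (continuous_itv_integrable (f := fun x => ReF w x ^+ 2 + ImF w x ^+ 2)).
  apply: continuous_subspaceT => x.
  apply: (@continuousD R R^o R (fun x => ReF w x ^+ 2) (fun x => ImF w x ^+ 2)).
    by apply: (@continuousM R R (ReF w) (ReF w)); exact: cRe.
  by apply: (@continuousM R R (ImF w) (ImF w)); exact: cIm.
move=> x /andP[x_ge0 _].
by rewrite (cint_FTC x_ge0 zd cRe cIm) cexpN0 subrr subr0 add0r.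
Qed.

End Eigenfunctions.

Lemma add1_invBM_eq0 (F : fieldType) (x y i : F) :
  y != x -> (1 + (x - y)^-1 * i == 0) = (x == y - i).
Proof.
move=> y_neq_x; have xy_neq0 : x - y != 0 by rewrite subr_eq0 eq_sym.
apply/eqP/eqP => [h|xE].
  have := congr1 (fun u => (x - y) * u) h.
  rewrite mulr0 mulrDr mulr1 mulrA divff // mul1r => /eqP; rewrite addrAC subr_eq0.
  by move/eqP <-; rewrite addrK.
have i_neq0 : i != 0 by apply: contraNneq y_neq_x => i0; rewrite xE i0 subr0.
by rewrite xE addrAC subrr add0r invrN mulNr mulVf // subrr.
Qed.

Section Spectrum.
Variable R : realType.
Variables (L : R) (g : R -> R[i]).
Hypotheses (L_gt0 : 0 < L) (Lg : L2 L g).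
Hypothesis lam0_neq_lamk : forall k : int, k != 0 -> lam0 L g != lamk L k.

Definition fourier_conj (k : int) : R[i] :=
  cint 0 L (fun x => (g x)^*%C * expi (- (2 * k%:~R * pi * x / L))).

Lemma cint_conj_cexpN (d : R[i]) (k : int) :
  cint 0 L (fun y => (g y)^*%C * (d * (1 - cexpN (lamk L k) y))) =
  d * (lam0 L g - fourier_conj k).
Proof.
have gI := cintegrable_conj (L2_cintegrable Lg).
have geI : cintegrable 0 L (fun x => (g x)^*%C * expi (- (2 * k%:~R * pi * x / L))).
  apply: cintegrableM_expi gI _ => x.
  apply: cvgN; apply: cvgM; last exact: cvg_cst.
  by apply: cvgM; [exact: cvg_cst | exact: cvg_id].
rewrite /fourier_conj /lam0 -cintB // -cintZ; last exact: cintegrableB.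
by apply: eq_cint => y _; rewrite expi_lamk; ring.
Qed.

Definition ker_Astar_Bstar_trivial := forall (lam : R[i]) (z : R -> R[i]),
  in_ker_lam_Astar L g lam z -> Bstar z L = 0 -> forall x, 0 <= x <= L -> z x = 0.

Definition nonresonant := forall k : int, k != 0 ->
  1 + (lamk L k - lam0 L g)^-1 * fourier_conj k != 0.

Lemma ker_trivial_of_nonresonant : nonresonant -> ker_Astar_Bstar_trivial.
Proof.
move=> nonres lam z [[_ zLz0] [w [zw hae]]]; rewrite /Bstar => zL.
have z0 : z 0 = 0 by rewrite -zLz0.
set c := cint 0 L _ in hae.
have zE := kernel_integral_equation (ltW L_gt0) zw z0 hae.
have [cRe cIm] := H1_deriv_continuous (ltW L_gt0) zw.
have LI : 0 <= L <= L by rewrite lexx ltW.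
have [lam0E|lam_neq0] := eqVneq lam 0.
  have c0 : c = 0.
    move: (zE L LI); rewrite zL lam0E mul0r subr0 => /esym/eqP.
    rewrite mulf_eq0 => /orP[/eqP //|].
    by rewrite eq_complex /= gt_eqF.
  by move=> x xI; rewrite zE // lam0E c0 !mul0r subr0.
have zd := integral_equation_solution L_gt0 cRe cIm zE (esym (divfK lam_neq0 c)).
have [d0|d_neq0] := eqVneq (c / lam) 0.
  by move=> x xI; rewrite zd // d0 mul0r.
have /(cexpN_eq1 L_gt0) [k lamE] : cexpN lam L = 1.
  move: (zd L LI); rewrite zL => /esym/eqP.
  by rewrite mulf_eq0 (negbTE d_neq0) subr_eq0 eq_sym => /eqP.
have k_neq0 : k != 0 by apply: contraNneq lam_neq0 => k0; rewrite lamE k0 lamk0.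
have cE : cint 0 L (fun y => (g y)^*%C * z y) = c / lam * (lam0 L g - fourier_conj k).
  by rewrite -cint_conj_cexpN; apply: eq_cint => y yI; rewrite zd // lamE.
move: cE; rewrite -/c -{1}(divfK lam_neq0 c) => /(mulfI d_neq0) resE.
by move: (nonres k k_neq0); rewrite add1_invBM_eq0 ?lam0_neq_lamk // -lamE resE eqxx.
Qed.

Lemma nonresonant_of_ker_trivial : ker_Astar_Bstar_trivial -> nonresonant.
Proof.
move=> ker_triv k k_neq0; rewrite add1_invBM_eq0 ?lam0_neq_lamk //.
apply/negP => /eqP resE.
have L_neq0 : L != 0 by rewrite gt_eqF.
pose z t := 1 - cexpN (lamk L k) t.
have zL : z L = 0 by rewrite /z cexpN_lamk_period // subrr.
have z0 : z 0 = 0 by rewrite /z cexpN0 subrr.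
have cE : cint 0 L (fun y => (g y)^*%C * z y) = lamk L k.
  by rewrite resE -[_ - _]mul1r -cint_conj_cexpN; apply: eq_cint => y _; rewrite mul1r.
have zker : in_ker_lam_Astar L g (lamk L k) z.
  split; first by split; [exists (fun t => lamk L k * cexpN (lamk L k) t);
                          exact: cexpN_H1_deriv | rewrite zL z0].
  exists (fun t => lamk L k * cexpN (lamk L k) t); split; first exact: cexpN_H1_deriv.
  by apply: aeW => x _; rewrite cE /z; ring.
have tI : 0 <= L / (2 * `|k%:~R : R|) <= L.
  have k_ge1 : 1 <= `|k%:~R : R| by rewrite -intr_norm ler1z -gtz0_ge1 normr_gt0.
  apply/andP; split; first by rewrite divr_ge0 ?mulr_ge0 ?normr_ge0 ?ltW.
  rewrite ler_pdivrMr ?mulr_gt0 ?(lt_le_trans ltr01 k_ge1) // ler_peMr ?ltW //.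
  by move: k_ge1; set s := `|_|; lra.
move: (ker_triv _ z zker zL _ tI); rewrite /z cexpN_lamk_half // opprK => /eqP.
by rewrite eq_complex /= (@pnatr_eq0 R 2).
Qed.

End Spectrum.

Unset Implicit Arguments.

Theorem proposition9 (R : realType) (L : R) (g : R -> R[i]) :
  0 < L -> L2 L g ->
  (forall k : int, k != 0 -> lam0 L g != lamk L k) ->
  ((forall (lam : R[i]) (z : R -> R[i]),
       in_ker_lam_Astar L g lam z -> Bstar z L = 0 ->
       forall x, 0 <= x <= L -> z x = 0)
   <->
   (forall k : int, k != 0 ->
      1 + (lamk L k - lam0 L g)^-1 *
            cint 0 L (fun x => (g x)^*%C * expi (- (2 * k%:~R * pi * x / L)))
      != 0)).
Proof.
move=> L_gt0 Lg lam0_neq_lamk; split.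
  exact: nonresonant_of_ker_trivial.
exact: ker_trivial_of_nonresonant.
Qed.
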